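(* Let $q(x)=x^g+a_{g-1}x^{g-1}+\cdots+a_1x+a_0\in\mathbb{Z}[x]$ be irreducible over $\mathbb{Z}$, and suppose $|a_{g-1}|>2g$. Then $\mathrm{sym}(q)(x)=x^g\,q\!\left(x+\frac1x\right)$ satisfies the homological criterion, i.e. it is symplectically irreducible, is not a cyclotomic polynomial, and is not a polynomial in $x^k$ for any $k>1$.
   Context: A symplectic polynomial is an even-degree integer polynomial that is monic and palindromic (equivalently, the characteristic polynomial of an element of $\mathrm{Sp}(2n,\mathbb{Z})$). A symplectic polynomial is symplectically irreducible if it is not a product of two nontrivial symplectic polynomials. A cyclotomic polynomial is the minimal polynomial over $\mathbb{Q}$ of a primitive $n$-th root of unity. *)

From HB Require Import structures.
From mathcomp Require Import all_boot all_order all_algebra all_field.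
Set Implicit Arguments. Unset Strict Implicit. Unset Printing Implicit Defensive.
Import GRing.Theory Num.Theory.
Local Open Scope ring_scope.

Definition symplectic (p : {poly int}) : Prop :=
  [/\ p \is monic, ~~ odd (size p).-1 &
      forall i : nat, (i <= (size p).-1)%N -> p`_i = p`_((size p).-1 - i)].

Definition symp_irreducible (p : {poly int}) : Prop :=
  symplectic p /\
  forall f h : {poly int}, symplectic f -> symplectic h -> p = f * h ->
    size f = 1%N \/ size h = 1%N.

Definition is_cyclotomic (p : {poly int}) : Prop :=
  exists2 n : nat, (0 < n)%N & p = 'Phi_n.

Definition poly_in_Xk (p : {poly int}) (k : nat) : Prop :=
  exists r : {poly int}, p = r \Po 'X^k.

(* sym(q)(x) = x^g q(x + 1/x), with g = deg q, written out as
   sum_i q_i (x^2+1)^i x^(g-i). *)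
Definition sym (q : {poly int}) : {poly int} :=
  \sum_(i < size q) q`_i *: (('X^2 + 1) ^+ i * 'X^((size q).-1 - i)).

Definition homological_criterion (p : {poly int}) : Prop :=
  [/\ symp_irreducible p, ~ is_cyclotomic p &
      forall k : nat, (1 < k)%N -> ~ poly_in_Xk p k].

From HB Require Import structures.
From mathcomp Require Import all_boot all_order all_algebra all_field.
From mathcomp Require Import zify.

(* The map r |-> x^c r(x + 1/x) is a linear bijection from polynomials of
   degree at most c onto polynomials of degree at most 2c whose coefficients
   are symmetric about c, and it is multiplicative.  Hence every symplectic
   polynomial is sym r for a monic r, a symplectic factorization of sym q
   pulls back to a factorization of q, and irreducibility of q yields
   symplectic irreducibility.  The coefficient of x^(2g-1) in sym q is a_(g-1).
   For a cyclotomic polynomial of degree 2g it is minus a sum of 2g roots of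
   unity, hence of absolute value at most 2g; and a nonzero coefficient next
   to the leading one forbids sym q from being a polynomial in x^k, k > 1. *)

Set Implicit Arguments. Unset Strict Implicit. Unset Printing Implicit Defensive.
Import Order.TTheory GRing.Theory Num.Theory.
Local Open Scope ring_scope.

Lemma size_polyS_coef_neq0 (R : nzSemiRingType) (p : {poly R}) n :
  (size p <= n.+1)%N -> p`_n != 0 -> size p = n.+1.
Proof.
by move=> sp pn; apply/anti_leq; rewrite sp ltnNge; apply: contra pn => /leq_sizeP ->.
Qed.

Section Palindromic.
Variable R : nzRingType.
Implicit Types (f p r s : {poly R}) (a : R).

Definition palindromic (c : nat) p :=
  (size p <= (2 * c).+1)%N /\ forall i j, (i + j = 2 * c)%N -> p`_i = p`_j.

Lemma palindromicD c p r :
  palindromic c p -> palindromic c r -> palindromic c (p + r).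
Proof.
move=> [sp Pp] [sr Pr]; split.
  by rewrite (leq_trans (size_polyD _ _)) // geq_max sp.
by move=> i j ij; rewrite !coefD (Pp _ _ ij) (Pr _ _ ij).
Qed.

Lemma palindromicZ c a p : palindromic c p -> palindromic c (a *: p).
Proof.
move=> [sp Pp]; split; first exact: leq_trans (size_scale_leq _ _) sp.
by move=> i j ij; rewrite !coefZ (Pp _ _ ij).
Qed.

Lemma palindromic_mulX c p : palindromic c.+1 (p * 'X) <-> palindromic c p.
Proof.
split=> [[spX PpX] | [sp Pp]].
  have Pp i j : (i + j = 2 * c)%N -> p`_i = p`_j.
    by move=> ij; have := PpX i.+1 j.+1; rewrite !coefMX /=; apply; lia.
  split=> //; apply/leq_sizeP => i hi.
  have -> : p`_i = (p * 'X)`_i.+1 by rewrite coefMX.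
  case: (ltngtP i.+1 (2 * c.+1)) => [|gt|->]; first lia.
    by rewrite nth_default // (leq_trans spX).
  by rewrite (PpX _ 0%N) ?addn0 // coefMX.
split; first by rewrite (leq_trans (size_polyMleq _ _)) // size_polyX; lia.
move=> [|i] [|j] ij; rewrite !coefMX /=; [lia | | | by apply: Pp; lia].
all: by rewrite nth_default // (leq_trans sp); lia.
Qed.

Lemma palindromic_mulX2D1 c p :
  palindromic c p -> palindromic c.+1 (('X^2 + 1) * p).
Proof.
move=> [sp Pp]; rewrite mulrDl mul1r; split.
  rewrite (leq_trans (size_polyD _ _)) // geq_max; apply/andP; split; last lia.
  by rewrite (leq_trans (size_polyMleq _ _)) // size_polyXn; lia.
move=> i j ij; rewrite !coefD !coefXnM.
case: ltnP => hi; case: ltnP => hj.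
- by have -> : i = j by lia.
- have -> : p`_j = 0 by rewrite nth_default // (leq_trans sp); lia.
  by rewrite add0r addr0; apply: Pp; lia.
- have -> : p`_i = 0 by rewrite nth_default // (leq_trans sp); lia.
  by rewrite add0r addr0; apply: Pp; lia.
- by rewrite (Pp (i - 2)%N j) ?(Pp i (j - 2)%N) 1?addrC //; lia.
Qed.

Lemma palindromic_X2D1_exp n : palindromic n (('X^2 + 1) ^+ n).
Proof.
elim: n => [|n IH]; last by rewrite exprS; apply: palindromic_mulX2D1.
rewrite expr0; split=> [|i j ij]; first by rewrite size_poly1.
by have [-> ->] : i = 0%N /\ j = 0%N by lia.
Qed.

Lemma coef_X2D1_exp_top n : (('X^2 + 1 : {poly R}) ^+ n)`_(2 * n) = 1.
Proof.
elim: n => [|n IH]; first by rewrite expr0 coef1.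
rewrite exprS mulrDl mul1r coefD coefXnM ifF; last lia.
have [sT _] := palindromic_X2D1_exp n.
rewrite [X in _ + X]nth_default ?addr0 ?(leq_trans sT) //; last lia.
by rewrite -IH; congr (_`_ _); lia.
Qed.

Lemma coef0_X2D1_exp n : (('X^2 + 1 : {poly R}) ^+ n)`_0 = 1.
Proof.
by have [_ PT] := palindromic_X2D1_exp n; rewrite (PT 0%N (2 * n)%N) ?coef_X2D1_exp_top.
Qed.

Lemma coef1_X2D1_exp n : (('X^2 + 1 : {poly R}) ^+ n)`_1 = 0.
Proof.
elim: n => [|n IH]; first by rewrite expr0 coef1.
by rewrite exprS mulrDl mul1r coefD coefXnM /= IH add0r.
Qed.

Definition symn (c : nat) r : {poly R} :=
  \sum_(i < c.+1) r`_i *: (('X^2 + 1) ^+ i * 'X^(c - i)).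

Fact symn_is_linear c : linear (symn c).
Proof.
move=> a p r; rewrite /symn scaler_sumr -big_split; apply: eq_bigr => i _.
by rewrite coefD coefZ scalerDl scalerA.
Qed.

HB.instance Definition _ c :=
  GRing.isLinear.Build R {poly R} {poly R} _ (symn c) (symn_is_linear c).

Lemma eq_symn c r s : (forall i, (i <= c)%N -> r`_i = s`_i) -> symn c r = symn c s.
Proof. by move=> rs; apply: eq_bigr => i _; rewrite rs // -ltnS. Qed.

Lemma symn0 r : symn 0 r = (r`_0)%:P.
Proof. by rewrite /symn big_ord1 expr0 mulr1 -alg_polyC. Qed.

Lemma symnS c r : symn c.+1 r = symn c r * 'X + r`_c.+1 *: ('X^2 + 1) ^+ c.+1.
Proof.
rewrite /symn big_ord_recr /= subnn expr0 mulr1 mulr_suml; congr (_ + _).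
apply: eq_bigr => i _; rewrite -scalerAl -mulrA -exprSr subSn //.
by rewrite -ltnS.
Qed.

Lemma palindromic_symn c r : palindromic c (symn c r).
Proof.
elim: c => [|c IH].
  rewrite symn0; split=> [|i j ij]; first exact: size_polyC_leq1.
  by have [-> ->] : i = 0%N /\ j = 0%N by lia.
rewrite symnS; apply: palindromicD; first exact/palindromic_mulX.
exact/palindromicZ/palindromic_X2D1_exp.
Qed.

Lemma coef_symn_top c r : (symn c r)`_(2 * c) = r`_c.
Proof.
case: c => [|c]; first by rewrite symn0 coefC.
rewrite symnS coefD coefMX mulnS /=.
have [sz _] := palindromic_symn c r.
rewrite nth_default; last by rewrite (leq_trans sz) //; lia.
by rewrite add0r coefZ -mulnS coef_X2D1_exp_top mulr1.
Qed.

Lemma coef0_symn c r : (symn c r)`_0 = r`_c.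
Proof.
by have [_ P] := palindromic_symn c r; rewrite (P 0%N (2 * c)%N) ?coef_symn_top.
Qed.

Lemma coef_symn_subtop c r : (symn c.+1 r)`_(2 * c).+1 = r`_c.
Proof.
rewrite symnS coefD coefMX /= coef_symn_top coefZ.
have [_ PT] := palindromic_X2D1_exp c.+1.
by rewrite (PT _ 1%N) ?coef1_X2D1_exp ?mulr0 ?addr0 //; lia.
Qed.

Lemma symn_eq0 c r : symn c r = 0 -> forall i, (i <= c)%N -> r`_i = 0.
Proof.
elim: c r => [|c IH] r r0 i ic.
  have -> : i = 0%N by lia.
  by rewrite -(coef0_symn 0) r0 coef0.
have rc1 : r`_c.+1 = 0 by rewrite -coef0_symn r0 coef0.
move: r0; rewrite symnS rc1 scale0r addr0 => r0.
have /IH rc : symn c r = 0.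
  by apply/polyP => j; have := congr1 (fun p => p`_j.+1) r0; rewrite coefMX !coef0.
by case: (ltnP i c.+1) => [|ci]; [apply: rc | have -> : i = c.+1 by lia].
Qed.

Lemma symn_Xn c k : (k <= c)%N -> symn c 'X^k = ('X^2 + 1) ^+ k * 'X^(c - k).
Proof.
move=> kc; rewrite /symn (bigD1 (Ordinal (kc : (k < c.+1)%N))) //= coefXn eqxx scale1r.
by rewrite big1 ?addr0 // => i; rewrite coefXn -val_eqE /= => /negbTE ->; rewrite scale0r.
Qed.

Lemma symn_surj c f :
  palindromic c f -> exists2 r : {poly R}, (size r <= c.+1)%N & f = symn c r.
Proof.
elim: c f => [|c IH] f Pf.
  exists (f`_0)%:P; first exact: size_polyC_leq1.
  by rewrite symn0 coefC /=; apply: size1_polyC; case: Pf.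
(* Removing f_0 (x^2 + 1)^(c+1) kills the constant term; dividing by x then
   leaves a polynomial symmetric about c. *)
set g := f - f`_0 *: ('X^2 + 1) ^+ c.+1.
have Pg : palindromic c.+1 g.
  by apply: palindromicD => //; rewrite -scaleNr; apply/palindromicZ/palindromic_X2D1_exp.
have gX : g = drop_poly 1 g * 'X.
  apply/polyP => -[|i]; rewrite coefMX ?coef_drop_poly ?addn1 //=.
  by rewrite coefB coefZ coef0_X2D1_exp mulr1 subrr.
have /palindromic_mulX /IH [r' sr' r'E] : palindromic c.+1 (drop_poly 1 g * 'X).
  by rewrite -gX.
exists (r' + f`_0 *: 'X^(c.+1)).
  rewrite (leq_trans (size_polyD _ _)) // geq_max (leq_trans sr') //=.
  by rewrite (leq_trans (size_scale_leq _ _)) // size_polyXn.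
rewrite symnS (@eq_symn _ _ r') => [|i ic]; last first.
  by rewrite coefD coefZ coefXn ltn_eqF ?mulr0 ?addr0.
rewrite -r'E -gX coefD coefZ coefXn eqxx mulr1 [r'`_c.+1]nth_default // add0r.
by rewrite /g subrK.
Qed.

End Palindromic.

Section SymnMul.
Variable R : comNzRingType.
Implicit Types r s : {poly R}.

Lemma symnM a b r s : (size r <= a.+1)%N -> (size s <= b.+1)%N ->
  symn (a + b) (r * s) = symn a r * symn b s.
Proof.
have expand (p : {poly R}) n : (size p <= n)%N -> p = \sum_(i < n) p`_i *: 'X^i.
  move=> sp; rewrite -poly_def; apply/polyP => j; rewrite coef_poly.
  by case: ltnP => // nj; rewrite nth_default // (leq_trans sp).
move=> /expand rE /expand sE; rewrite rE sE mulr_suml !raddf_sum mulr_suml.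
apply: eq_bigr => /= i _; rewrite mulr_sumr raddf_sum mulr_sumr; apply: eq_bigr => /= j _.
have ia := ltn_ord i; have jb := ltn_ord j.
rewrite -scalerAl -scalerAr scalerA -exprD !linearZ /= !symn_Xn; try lia.
rewrite -scalerAl -scalerAr scalerA mulrACA -!exprD; congr (_ *: (_ * 'X^_)); lia.
Qed.

End SymnMul.

Lemma irredp_mul (R : idomainType) (r s : {poly R}) :
  irreducible_poly (r * s) -> size r = 1%N \/ size s = 1%N.
Proof.
move=> irr; have /irredp_neq0 := irr; rewrite mulf_eq0 negb_or => /andP [r0 s0].
have [r1 | r1] := eqVneq (size r) 1%N; [by left | right].
have := eqp_size (irr.2 r r1 (dvdp_mulIl r s)); rewrite size_mul //.
by have := size_poly_gt0 r; have := size_poly_gt0 s; rewrite r0 s0; lia.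
Qed.

Section Sym.
Implicit Types f q r s : {poly int}.

Lemma symE q : sym q = symn (size q).-1 q.
Proof.
have [->|q0] := eqVneq q 0; first by rewrite /sym size_poly0 big_ord0 linear0.
by rewrite /sym /symn; move: q0; rewrite -size_poly_gt0; case: (size q).
Qed.

Lemma size_sym q : q \is monic -> size (sym q) = (2 * (size q).-1).+1.
Proof.
move=> mq; have [sz _] := palindromic_symn (size q).-1 q.
rewrite symE (size_polyS_coef_neq0 sz) //.
by rewrite coef_symn_top -lead_coefE (monicP mq) oner_neq0.
Qed.

Lemma sym_monic q : q \is monic -> sym q \is monic.
Proof.
by move=> mq; rewrite monicE lead_coefE size_sym // symE coef_symn_top -lead_coefE.
Qed.

Lemma symplectic_sym q : q \is monic -> symplectic (sym q).
Proof.
move=> mq; split; [exact: sym_monic | by rewrite size_sym //= oddM |].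
have [_ P] := palindromic_symn (size q).-1 q.
by rewrite size_sym // => i hi; rewrite symE; apply: P; lia.
Qed.

Lemma symplectic_symP f : symplectic f <-> exists2 r, r \is monic & f = sym r.
Proof.
split=> [[mf even Pf] | [r mr ->]]; last exact: symplectic_sym.
set c := ((size f).-1)./2.
have fc : (size f).-1 = (2 * c)%N.
  by have := odd_double_half (size f).-1; rewrite (negbTE even) add0n -mul2n.
have /symn_surj [r sr fE] : palindromic c f.
  split=> [|i j ij]; first by rewrite -fc leqSpred.
  by rewrite Pf fc; [congr (_`_ _) | ]; lia.
have rc : r`_c = 1.
  by rewrite -coef0_symn -fE Pf // subn0 -lead_coefE (monicP mf).
have {}sr : size r = c.+1 by rewrite (size_polyS_coef_neq0 sr) // rc oner_neq0.
exists r; first by rewrite monicE lead_coefE sr rc.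
by rewrite symE sr.
Qed.

Lemma symM r s : r \is monic -> s \is monic -> sym (r * s) = sym r * sym s.
Proof.
move=> mr ms; have r0 := monic_neq0 mr; have s0 := monic_neq0 ms.
rewrite !symE -symnM ?leqSpred // size_Mmonic //; congr (symn _ _).
by have := size_poly_gt0 r; have := size_poly_gt0 s; rewrite r0 s0; lia.
Qed.

Lemma sym_inj : {in monic &, injective sym}.
Proof.
move=> p q mp mq pq.
have spq : size p = size q.
  have := size_sym mp; rewrite pq size_sym //.
  by have := size_poly_gt0 p; have := size_poly_gt0 q; rewrite !monic_neq0 //; lia.
have d0 : symn (size p).-1 (p - q) = 0 by rewrite raddfB /= -symE spq -symE pq subrr.
apply/eqP; rewrite -subr_eq0; apply/eqP/polyP => i; rewrite coef0.
case: (leqP i (size p).-1) => [/(symn_eq0 d0) // | pi].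
by rewrite coefB !nth_default ?subr0 // -?spq; apply: leq_trans (leqSpred _) pi.
Qed.

Lemma symp_irreducible_sym q :
  q \is monic -> irreducible_poly q -> symp_irreducible (sym q).
Proof.
move=> mq irr; split; first exact: symplectic_sym.
move=> _ _ /symplectic_symP [r mr ->] /symplectic_symP [s ms ->].
have mrs : r * s \is monic by rewrite monicMl.
rewrite -symM // => /(sym_inj mq mrs) qE; rewrite qE in irr.
by case: (irredp_mul irr) => e; [left | right]; rewrite size_sym // e.
Qed.

End Sym.

Lemma norm_prim_root (R : numDomainType) n (z : R) : n.-primitive_root z -> `|z| = 1.
Proof.
move=> pz; apply/eqP; rewrite -(pexpr_eq1 (prim_order_gt0 pz)) // -normrX.
by rewrite prim_expr_order // normr1.
Qed.

Lemma norm_coefPn_prod_XsubC (R : numDomainType) (ps : seq R) :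
  size ps != 0%N -> {in ps, forall z, `|z| <= 1} ->
  `|(\prod_(z <- ps) ('X - z%:P))`_(size ps).-1| <= (size ps)%:R.
Proof.
move=> ps0 ps1; rewrite coefPn_prod_XsubC // normrN -sum1_size natr_sum.
rewrite (le_trans (ler_norm_sum _ _ _)) // !big_seq; exact: ler_sum.
Qed.

Lemma norm_coef_Cyclotomic n :
  (0 < n)%N -> `|('Phi_n)`_(totient n).-1| <= (totient n)%:Z.
Proof.
move=> n0; have [z pz] := C_prim_root_exists n0.
set ps := [seq z ^+ k | k : 'I_n <- [seq k : 'I_n <- index_enum 'I_n | coprime k n]].
have cycE : cyclotomic z n = \prod_(w <- ps) ('X - w%:P).
  by rewrite big_map big_filter.
have sps : size ps = totient n.
  by have := size_cyclotomic z n; rewrite cycE size_prod_XsubC => -[].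
rewrite -(ler_int algC) intr_norm -sps.
have -> : (('Phi_n)`_(size ps).-1)%:~R = (cyclotomic z n)`_(size ps).-1 :> algC.
  by rewrite -(Cintr_Cyclotomic pz) coef_map.
rewrite cycE.
apply: norm_coefPn_prod_XsubC; first by rewrite sps -lt0n totient_gt0.
by move=> _ /mapP [k _ ->]; rewrite normrX (norm_prim_root pz) expr1n.
Qed.

Lemma coef_comp_poly_Xn_consecutive (R : nzRingType) (r : {poly R}) k i :
  (1 < k)%N -> (r \Po 'X^k)`_i = 0 \/ (r \Po 'X^k)`_i.+1 = 0.
Proof.
move=> k1; rewrite !coef_comp_poly_Xn; try lia.
case: ifP => [ki | _]; [right | by left].
by case: ifP => //; rewrite -addn1 dvdn_addr // dvdn1; lia.
Qed.

Theorem proposition3p4 (g : nat) (q : {poly int})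
  (hmonic : q \is monic) (hsize : size q = g.+1)
  (hirr : irreducible_poly q)
  (hcoef : (2 * g)%:Z < `|q`_g.-1|) :
  homological_criterion (sym q).
Proof.
have g0 : (0 < g)%N by have := hirr.1; rewrite hsize.
have sym_top : (sym q)`_(2 * g) = 1.
  by move/monicP: hmonic; rewrite symE lead_coefE hsize coef_symn_top.
have sym_subtop : (sym q)`_(2 * g).-1 = q`_g.-1.
  case: g g0 {hcoef sym_top} hsize => // c _ sq.
  by rewrite symE sq mulnS coef_symn_subtop.
split; first exact: symp_irreducible_sym.
- move=> [n n0 Phi]; have := norm_coef_Cyclotomic n0.
  have -> : totient n = (2 * g)%N.
    by have := size_Cyclotomic n; rewrite -Phi size_sym // hsize => -[].
  by rewrite -Phi sym_subtop leNgt hcoef.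
- move=> k k1 [r rE]; have := coef_comp_poly_Xn_consecutive r (2 * g).-1 k1.
  rewrite -rE prednK ?muln_gt0 // sym_top sym_subtop => -[q0 | //].
  by move: hcoef; rewrite q0 normr0 ltNge.
Qed.
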